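(* Let $P(z)=a_0z^n+a_1z^{n-1}+\dots+a_n$ with $a_j\in\mathbb{C}$, $a_0\neq 0$, $n\ge 1$, and define $f(r,\theta)=\frac{P'(re^{i\theta})}{P(re^{i\theta})}$ for $r\ge 0$, $\theta\in\mathbb{R}$ with $P(re^{i\theta})\neq 0$. Let $0<a<b$ and suppose the closed annulus $K(a,b)=\{z\in\mathbb{C}: a\le|z|\le b\}$ contains no root of $P$. Then $$\left|\frac{\partial}{\partial\theta}f(r,\theta)\right|\le \frac{9nb}{(b-a)^2}\qquad\text{for } r=a+k\tfrac{b-a}{3},\ k=1,2,\ \theta\in\mathbb{R}.$$
   Context: $P'$ denotes the derivative of $P$. *)

From Stdlib Require Import Reals.
From Coquelicot Require Import Coquelicot.
Open Scope R_scope.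

Definition poly_eval (n : nat) (a : nat -> C) (z : C) : C :=
  sum_n (fun j => Cmult (a j) (Cpow z (n - j))) n.

(* P'(z) = sum_j (n-j) a_j z^(n-j-1)  (the term j = n vanishes) *)
Definition poly_deriv_eval (n : nat) (a : nat -> C) (z : C) : C :=
  sum_n (fun j => Cmult (RtoC (INR (n - j))) (Cmult (a j) (Cpow z (n - j - 1)))) n.

Definition polar (r theta : R) : C := (r * cos theta, r * sin theta).

Definition logder (n : nat) (a : nat -> C) (r theta : R) : C :=
  Cdiv (poly_deriv_eval n a (polar r theta)) (poly_eval n a (polar r theta)).

(* Write w = r e^{i theta} with r = a + k (b - a) / 3.  Since no root of P lies in the
   annulus, every root rho satisfies |w - rho| >= (b - a) / 3.  Factoring P over the complex
   numbers gives f(r, theta) = sum_rho 1 / (w - rho), a sum of at most n terms (roots counted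
   with multiplicity), and the theta-derivative of each term is -i w / (w - rho)^2, of modulus
   r / |w - rho|^2 <= 9 r / (b - a)^2 <= 9 b / (b - a)^2. *)

From Stdlib Require Import Reals Lra List.
From Coquelicot Require Import Coquelicot.
Open Scope R_scope.

Definition sumC (l : list C) : C := fold_right Cplus 0%C l.

(* The factorisation of P takes place in the algebraically closed field R[i] of mathcomp,
   into which toRi transports Coquelicot's C. *)
From mathcomp Require all_boot all_algebra Rstruct complex ring.

Module RootDecomposition.
Local Set Warnings "-notation-overridden,-ambiguous-paths,-notation-incompatible-prefix".
Import all_boot all_algebra Rstruct complex ring.
Import GRing.Theory.
Local Open Scope ring_scope.

Definition toRi (z : C) : R[i] := Complex z.1 z.2.
Definition ofRi (w : R[i]) : C := (complex.Re w, complex.Im w).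

Lemma toRiK : cancel toRi ofRi. Proof. by case. Qed.
Lemma ofRiK : cancel ofRi toRi. Proof. by case. Qed.
Lemma toRi_inj : injective toRi. Proof. exact: can_inj toRiK. Qed.

Lemma toRiD u v : toRi (Cplus u v) = toRi u + toRi v. Proof. by case: u => x y; case: v => x' y'. Qed.
Lemma toRiN u : toRi (Copp u) = - toRi u. Proof. by case: u. Qed.
Lemma toRiB u v : toRi (Cminus u v) = toRi u - toRi v. Proof. by rewrite toRiD toRiN. Qed.
Lemma toRiM u v : toRi (Cmult u v) = toRi u * toRi v. Proof. by case: u => x y; case: v => x' y'. Qed.
Lemma toRiV u : toRi (Cinv u) = (toRi u)^-1.
Proof.
case: u => x y; rewrite /toRi /Cinv /= /GRing.inv /=.
by congr (Complex _ _); rewrite -!RpowE // /Rdiv -Ropp_mult_distr_l.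
Qed.
Lemma toRi_div u v : toRi (Cdiv u v) = toRi u / toRi v.
Proof. by rewrite toRiM toRiV. Qed.
Lemma toRiX u k : toRi (Cpow u k) = toRi u ^+ k.
Proof. by elim: k => //= k IH; rewrite toRiM IH exprS. Qed.
Lemma toRi_nat m : toRi (RtoC (INR m)) = m%:R.
Proof. by rewrite -[toRi _]/((INR m)%:C)%C INRE rmorph_nat. Qed.

Lemma toRi_sum_n (f : nat -> C) m : toRi (sum_n f m) = \sum_(j < m.+1) toRi (f j).
Proof.
elim: m => [|m IH]; first by rewrite sum_O big_ord1.
by rewrite sum_Sn big_ord_recr /= -IH -toRiD.
Qed.

Lemma toRi_sumC (l : list C) : toRi (sumC l) = \sum_(x <- l) toRi x.
Proof. by elim: l => [|x l IH]; rewrite ?big_nil // big_cons /= toRiD IH. Qed.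

Section PolyOfCoefs.
Variables (n : nat) (a : nat -> C).

Definition poly_of_coefs : {poly R[i]} := \sum_(j < n.+1) toRi (a j) *: 'X^(n - j).

Lemma toRi_poly_eval z : toRi (poly_eval n a z) = poly_of_coefs.[toRi z].
Proof.
rewrite /poly_eval toRi_sum_n /poly_of_coefs horner_sum; apply: eq_bigr => j _.
by rewrite toRiM toRiX hornerZ hornerXn.
Qed.

Lemma toRi_poly_deriv_eval z : toRi (poly_deriv_eval n a z) = poly_of_coefs^`().[toRi z].
Proof.
rewrite /poly_deriv_eval toRi_sum_n /poly_of_coefs raddf_sum horner_sum; apply: eq_bigr => j _.
rewrite !minusE /= derivZ derivXn hornerZ hornerMn hornerXn.
by rewrite !toRiM toRi_nat toRiX subn1 mulr_natl -mulrnAr.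
Qed.

Lemma size_poly_of_coefs : (size poly_of_coefs <= n.+1)%N.
Proof.
rewrite /poly_of_coefs; apply: (big_ind (fun q : {poly R[i]} => (size q <= n.+1)%N)).
- by rewrite size_poly0.
- by move=> p q Hp Hq; rewrite (leq_trans (size_polyD _ _)) // geq_max Hp Hq.
- move=> j _; rewrite (leq_trans (size_scale_leq _ _)) //.
  by rewrite size_polyXn ltnS leq_subr.
Qed.
End PolyOfCoefs.

Lemma logder_prod_XsubC (F : fieldType) (rs : seq F) (w : F) :
  (\prod_(x <- rs) ('X - x%:P)).[w] != 0 ->
  (\prod_(x <- rs) ('X - x%:P))^`().[w] / (\prod_(x <- rs) ('X - x%:P)).[w]
  = \sum_(x <- rs) (w - x)^-1.
Proof.
elim: rs => [|x rs IH]; first by rewrite !big_nil derivC horner0 mul0r.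
rewrite !big_cons derivM derivXsubC mul1r hornerD !hornerM !hornerXsubC.
rewrite mulf_eq0 negb_or => /andP[Hx Hq].
by rewrite -(IH Hq); field; rewrite Hx Hq.
Qed.

Lemma length_size (T : Type) (l : list T) : List.length l = size l.
Proof. by elim: l => //= x l ->. Qed.
Lemma List_map_map (T U : Type) (f : T -> U) (l : list T) : List.map f l = map f l.
Proof. by elim: l => //= x l ->. Qed.

Lemma logder_sum_over_roots (n : nat) (a : nat -> C) (z0 : C) :
  poly_eval n a z0 <> RtoC 0 ->
  exists L : list C, (List.length L <= n)%coq_nat /\
    (forall rho, List.In rho L -> poly_eval n a rho = RtoC 0) /\
    forall z, poly_eval n a z <> RtoC 0 ->
      Cdiv (poly_deriv_eval n a z) (poly_eval n a z) =
      sumC (List.map (fun rho => Cinv (Cminus z rho)) L).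
Proof.
move=> Pz0.
have toRi_eq0 u : (toRi u == 0) = (u == RtoC 0).
  by rewrite -(inj_eq toRi_inj).
set p := poly_of_coefs n a.
have p_neq0 z : poly_eval n a z <> RtoC 0 -> p.[toRi z] != 0.
  by move=> Pz; rewrite -toRi_poly_eval toRi_eq0; apply/eqP.
have [rs Dp] := closed_field_poly_normal p.
have lc_neq0 : lead_coef p != 0.
  by rewrite lead_coef_eq0; apply: contraNneq (p_neq0 _ Pz0) => ->; rewrite horner0.
exists (List.map ofRi rs); split; [|split].
- rewrite length_size List_map_map size_map; apply/leP.
  by have := size_poly_of_coefs n a; rewrite -/p Dp size_scale // size_prod_XsubC.
- move=> rho /List.in_map_iff [x [<- Hx]]; apply/eqP.
  rewrite -toRi_eq0 toRi_poly_eval ofRiK -/p Dp hornerZ.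
  have : root (\prod_(y <- rs) ('X - y%:P)) x by rewrite root_prod_XsubC; apply/Iter.In_mem.
  by move=> /eqP ->; rewrite mulr0.
- move=> z Pz; apply: toRi_inj.
  rewrite toRi_div toRi_poly_deriv_eval toRi_poly_eval toRi_sumC List_map_map !big_map.
  have := p_neq0 _ Pz; rewrite -/p Dp derivZ !hornerZ mulf_eq0 negb_or => /andP[_ Hq].
  rewrite -mulf_div divff // mul1r logder_prod_XsubC //.
  by apply: eq_bigr => x _; rewrite toRiV toRiB ofRiK.
Qed.
End RootDecomposition.

Lemma is_derive_pair (f g : R -> R) (x df dg : R) :
  is_derive f x df -> is_derive g x dg ->
  is_derive (fun t => (f t, g t) : C) x (df, dg).
Proof.
  intros Hf Hg.
  apply (filterdiff_comp'_2 f g pair x _ _ pair Hf Hg).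
  apply filterdiff_linear, is_linear_prod; [apply is_linear_fst | apply is_linear_snd].
Qed.

Lemma is_derive_fst (g : R -> C) (x : R) (dg : C) :
  is_derive g x dg -> is_derive (fun t => fst (g t)) x (fst dg).
Proof.
  intros Hg. apply (filterdiff_comp g fst _ fst Hg).
  apply filterdiff_linear, is_linear_fst.
Qed.

Lemma is_derive_snd (g : R -> C) (x : R) (dg : C) :
  is_derive g x dg -> is_derive (fun t => snd (g t)) x (snd dg).
Proof.
  intros Hg. apply (filterdiff_comp g snd _ snd Hg).
  apply filterdiff_linear, is_linear_snd.
Qed.

Lemma is_derive_Cinv (g : R -> C) (x : R) (dg : C) :
  is_derive g x dg -> g x <> 0%C ->
  is_derive (fun t => / g t)%C x (- (dg / (g x * g x)))%C.
Proof.
  intros Hg Hgx.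
  set (u t := fst (g t)). set (v t := snd (g t)).
  assert (Hu : is_derive u x (fst dg)) by exact (is_derive_fst g x dg Hg).
  assert (Hv : is_derive v x (snd dg)) by exact (is_derive_snd g x dg Hg).
  assert (Hg_uv : g x = (u x, v x)) by (unfold u, v; destruct (g x); reflexivity).
  assert (Hn : 0 < u x ^ 2 + v x ^ 2).
  { destruct (Req_dec (u x) 0) as [Hu0|], (Req_dec (v x) 0) as [Hv0|]; try nra.
    exfalso. apply Hgx. rewrite Hg_uv, Hu0, Hv0. reflexivity. }
  apply is_derive_ext with (fun t => (u t / (u t ^ 2 + v t ^ 2), - v t / (u t ^ 2 + v t ^ 2)) : C).
  { intro t. unfold u, v. reflexivity. }
  rewrite Hg_uv. destruct dg as [du dv]. simpl in Hu, Hv.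
  apply is_derive_pair; auto_derive;
    try (repeat split; solve [nra | eexists; eassumption]);
    replace (Derive (fun t => u t) x) with du by (symmetry; exact (is_derive_unique u x du Hu));
    replace (Derive (fun t => v t) x) with dv by (symmetry; exact (is_derive_unique v x dv Hv));
    simpl; field; split; nra.
Qed.

Lemma is_derive_polar_sub (r : R) (rho : C) (t : R) :
  is_derive (fun s => polar r s - rho)%C t (Ci * polar r t)%C.
Proof.
  destruct rho as [p q].
  replace (Ci * polar r t)%C with ((- (r * sin t), r * cos t) : C)
    by (unfold Ci, polar, Cmult; simpl; f_equal; ring).
  apply is_derive_ext with (fun s => (r * cos s - p, r * sin s - q) : C).
  { intro s. unfold polar, Cminus, Cplus, Copp; simpl. f_equal; ring. }
  apply is_derive_pair; auto_derive; auto; ring.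
Qed.

Lemma is_derive_inv_polar_sub (r : R) (rho : C) (t : R) :
  (polar r t - rho)%C <> 0%C ->
  is_derive (fun s => / (polar r s - rho))%C t
    (- (Ci * polar r t / ((polar r t - rho) * (polar r t - rho))))%C.
Proof.
  intros Hne. apply (is_derive_Cinv (fun s => polar r s - rho)%C); [|exact Hne].
  apply is_derive_polar_sub.
Qed.

Lemma is_derive_sumC_map (F dF : C -> R -> C) (L : list C) (t : R) :
  (forall rho, In rho L -> is_derive (F rho) t (dF rho t)) ->
  is_derive (fun s => sumC (map (fun rho => F rho s) L)) t (sumC (map (fun rho => dF rho t) L)).
Proof.
  induction L as [|rho L IH]; intros HF; simpl.
  - apply (is_derive_const (V := C_R_NormedModule) (RtoC 0)).
  - apply (is_derive_plus (V := C_R_NormedModule)).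
    + apply HF; left; reflexivity.
    + apply IH. intros; apply HF; right; assumption.
Qed.

Lemma Cmod_sumC_map_le (f : C -> C) (L : list C) (M : R) :
  (forall x, In x L -> Cmod (f x) <= M) ->
  Cmod (sumC (map f L)) <= INR (length L) * M.
Proof.
  induction L as [|x L IH]; intros Hf.
  - simpl. rewrite Cmod_0. lra.
  - change (Cmod (f x + sumC (map f L))%C <= INR (S (length L)) * M).
    eapply Rle_trans; [apply Cmod_triangle|].
    rewrite S_INR.
    assert (Hx : Cmod (f x) <= M) by (apply Hf; left; reflexivity).
    assert (HL : Cmod (sumC (map f L)) <= INR (length L) * M)
      by (apply IH; intros; apply Hf; right; assumption).
    lra.
Qed.

Lemma Cmod_triangle_inv (z w : C) : Rabs (Cmod z - Cmod w) <= Cmod (z - w).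
Proof.
  assert (Hz := Cmod_triangle (z - w) w).
  assert (Hw := Cmod_triangle (- (z - w)) z).
  replace (z - w + w)%C with z in Hz by ring.
  replace (- (z - w) + z)%C with w in Hw by ring.
  rewrite Cmod_opp in Hw.
  apply Rabs_le; lra.
Qed.

Lemma Cmod_sub_ge_off_annulus (A B d : R) (w rho : C) :
  A + d <= Cmod w <= B - d -> ~ (A <= Cmod rho <= B) -> d <= Cmod (w - rho).
Proof.
  intros Hw Hrho. assert (H := Cmod_triangle_inv w rho).
  apply Rabs_le_between in H.
  destruct (Rle_or_lt A (Cmod rho)); [destruct (Rle_or_lt (Cmod rho) B)|]; [tauto | lra | lra].
Qed.

Lemma Cmod_polar (r t : R) : 0 <= r -> Cmod (polar r t) = r.
Proof.
  intros Hr. unfold Cmod, polar; simpl.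
  replace (r * cos t * (r * cos t * 1) + r * sin t * (r * sin t * 1))
    with (r ^ 2 * (sin t ^ 2 + cos t ^ 2)) by ring.
  rewrite <- !Rsqr_pow2, sin2_cos2, Rmult_1_r, Rsqr_pow2.
  apply sqrt_pow2, Hr.
Qed.

Lemma Cmod_deriv_inv_polar_sub_le (r d t : R) (rho : C) :
  0 <= r -> 0 < d -> d <= Cmod (polar r t - rho) ->
  Cmod (- (Ci * polar r t / ((polar r t - rho) * (polar r t - rho))))%C <= r / d ^ 2.
Proof.
  intros Hr Hd Hdist.
  assert (Hne : (polar r t - rho)%C <> 0%C) by (apply Cmod_gt_0; lra).
  rewrite Cmod_opp, Cmod_div, !Cmod_mult, Cmod_Ci, Cmod_polar by (auto; apply Cmult_neq_0; auto).
  rewrite Rmult_1_l. unfold Rdiv. apply Rmult_le_compat_l; [exact Hr|].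
  apply Rinv_le_contravar; nra.
Qed.

Theorem lemma2p2 (n : nat) (a : nat -> C) (A B : R) :
  (1 <= n)%nat ->
  a 0%nat <> RtoC 0 ->
  0 < A -> A < B ->
  (forall z : C, A <= Cmod z <= B -> poly_eval n a z <> RtoC 0) ->
  forall (k : nat), (k = 1%nat \/ k = 2%nat) ->
  forall theta : R,
    exists l : C,
      is_derive (fun t : R => logder n a (A + INR k * (B - A) / 3) t) theta l /\
      Cmod l <= 9 * INR n * B / (B - A) ^ 2.
Proof.
  intros _ _ HA HAB Hroots k Hk theta.
  set (r := A + INR k * (B - A) / 3).
  set (d := (B - A) / 3).
  assert (Hd : 0 < d) by (unfold d; lra).
  assert (Hr : A + d <= r <= B - d) by (unfold r, d; destruct Hk; subst k; simpl; lra).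
  assert (Hcircle : forall s, Cmod (polar r s) = r) by (intro s; apply Cmod_polar; lra).
  assert (HP : forall s, poly_eval n a (polar r s) <> RtoC 0)
    by (intro s; apply Hroots; rewrite Hcircle; lra).
  destruct (RootDecomposition.logder_sum_over_roots n a (polar r theta) (HP theta))
    as [L [HL [Hroot Hlogder]]].
  assert (Hdist : forall rho, In rho L -> d <= Cmod (polar r theta - rho)).
  { intros rho Hrho. apply (Cmod_sub_ge_off_annulus A B); [rewrite Hcircle; lra|].
    intro Hann. exact (Hroots rho Hann (Hroot rho Hrho)). }
  exists (sumC (map (fun rho =>
    - (Ci * polar r theta / ((polar r theta - rho) * (polar r theta - rho))))%C L)).
  split.
  - apply is_derive_ext with (fun s => sumC (map (fun rho => / (polar r s - rho))%C L)).
    { intro s. symmetry. apply Hlogder, HP. }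
    apply (is_derive_sumC_map (fun rho s => / (polar r s - rho))%C
      (fun rho t => - (Ci * polar r t / ((polar r t - rho) * (polar r t - rho))))%C).
    intros rho Hrho. apply is_derive_inv_polar_sub, Cmod_gt_0.
    specialize (Hdist rho Hrho). lra.
  - eapply Rle_trans; [apply (Cmod_sumC_map_le _ L (r / d ^ 2))|].
    { intros rho Hrho. apply Cmod_deriv_inv_polar_sub_le; auto; lra. }
    replace (9 * INR n * B / (B - A) ^ 2) with (INR n * (B / d ^ 2)) by (unfold d; field; lra).
    assert (Hd2 : 0 < / d ^ 2) by (apply Rinv_0_lt_compat, pow_lt, Hd).
    apply Rmult_le_compat; [apply pos_INR | unfold Rdiv; nra | apply le_INR, HL |].
    unfold Rdiv. apply Rmult_le_compat_r; lra.
Qed.
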